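(* Let $d\ge2$ and $R,S\subset\mathbb{Z}_d$. Then $\mathrm{ZMF}^{\mathrm{gr}}_{\mathrm{bi}}(\hat P_R,\hat P_S)=\mathbb{C}\,1$ if $R=S$, and $\mathrm{ZMF}^{\mathrm{gr}}_{\mathrm{bi}}(\hat P_R,\hat P_S)=0$ otherwise.
   Context: Let $\eta=e^{2\pi i/d}$. Graded matrix bifactorisations of $x^d$: $\mathbb{Z}_2$-graded free $\mathbb{C}[x,y]$-modules $M$ with a $\mathbb{C}$-grading compatible with the module structure, where $x,y$ have $\mathbb{C}$-degree $2/d$, and an odd $\mathbb{C}[x,y]$-linear $d^M$ of $\mathbb{C}$-degree $1$ with $d^M\circ d^M=(x^d-y^d)1_M$. $\mathrm{ZMF}^{\mathrm{gr}}_{\mathrm{bi}}(M,N)$ is the space of even $\mathbb{C}[x,y]$-linear maps $f:M\to N$ of $\mathbb{C}$-degree $0$ with $d^Nf=fd^M$. For $S\subset\mathbb{Z}_d$ and $\alpha\in\mathbb{C}$, $P_S\{\alpha\}$ has even part $\mathbb{C}[x,y]$ with $1$ in degree $\alpha$, odd part $\mathbb{C}[x,y]$ with $1$ in degree $\alpha+\frac2d|S|-1$, $d_1=\prod_{j\in S}(x-\eta^jy)$ (odd to even), $d_0=\prod_{j\notin S}(x-\eta^jy)$ (even to odd). $\hat P_S:=P_S\{\frac{1-|S|}{d}\}$. *)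

From HB Require Import structures.
From Stdlib Require Import Reals.
From mathcomp Require Import all_boot all_order all_algebra.
From mathcomp Require Import Rstruct complex.
Set Implicit Arguments. Unset Strict Implicit. Unset Printing Implicit Defensive.
Import Order.TTheory GRing.Theory Num.Theory.
Local Open Scope ring_scope.

Definition CC : Type := (Rdefinitions.R)[i].

Definition eta (d : nat) : CC :=
  Complex (cos (2 * PI / INR d))%R (sin (2 * PI / INR d))%R.

(* Bivariate polynomials C[x,y] are represented as {poly {poly C}}:
   the outer variable is x, the inner variable is y.  The coefficient of
   x^i y^j in p is  p`_i`_j. *)
Definition bipoly := {poly {poly CC}}.
Definition varx : bipoly := 'X.
Definition vary : bipoly := ('X)%:P.

(* A homogeneous (w.r.t. the C-grading, deg x = deg y = 2/d) bivariate
   polynomial of C-degree a : every monomial x^i y^j occurring in p has degree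
   (i+j)*2/d = a.  (The zero polynomial is homogeneous of every degree.) *)
Definition homog_deg (d : nat) (a : CC) (p : bipoly) : Prop :=
  forall i j : nat, p`_i`_j != 0 -> (i + j)%:R * (2 / d%:R) = a.

(* A graded matrix bifactorisation of rank (1|1): even part C[x,y] with
   generator 1 in C-degree deg0, odd part C[x,y] with generator 1 in C-degree
   deg1, differential given by d1 : odd -> even and d0 : even -> odd. *)
Record mf11 := MF11 {
  deg0 : CC; deg1 : CC; dif1 : bipoly; dif0 : bipoly }.

Definition P_shift (d : nat) (S : {set 'I_d}) (alpha : CC) : mf11 :=
  MF11 alpha (alpha + (2 / d%:R) * #|S|%:R - 1)
       (\prod_(j in S) (varx - ((eta d) ^+ j)%:P%:P * vary))
       (\prod_(j in ~: S) (varx - ((eta d) ^+ j)%:P%:P * vary)).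

Definition Phat (d : nat) (S : {set 'I_d}) : mf11 :=
  P_shift S ((1 - #|S|%:R) / d%:R).

(* An even C[x,y]-linear map
   f : M -> N is determined by the images of the generators:
   f(1_even) = f0 * 1_even, f(1_odd) = f1 * 1_odd, i.e. by the pair (f0, f1).
   It has C-degree 0 iff f0, f1 are homogeneous of the appropriate degrees,
   and d^N f = f d^M amounts to  d1^N f1 = f0 d1^M  and  d0^N f0 = f1 d0^M. *)
Definition ZMF (d : nat) (M N : mf11) (f : bipoly * bipoly) : Prop :=
  [/\ homog_deg d (deg0 M - deg0 N) f.1,
      homog_deg d (deg1 M - deg1 N) f.2,
      dif1 N * f.2 = f.1 * dif1 M &
      dif0 N * f.1 = f.2 * dif0 M].

(* A morphism (f0, f1) of C-degree 0 between \hat P_R and \hat P_S has f0 homogeneous of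
   degree (|S| - |R|)/d and f1 of degree (|R| - |S|)/d; as x and y have degree 2/d, all
   monomials of f0 have total degree (|S| - |R|)/2 and those of f1 total degree (|R| - |S|)/2.
   So one of them vanishes unless |R| = |S|, and then both are constants.  The relation
   d1^S f1 = f0 d1^R between monic polynomials in x then forces f1 = f0 = 0 in the first case,
   and f0 = f1 = c in the second; if c <> 0 the products of the distinct linear factors
   x - eta^j y over R and over S coincide, whence R = S. *)

From Pilot Require Import Defs.
From HB Require Import structures.
From Stdlib Require Import Reals Lra.
From mathcomp Require Import all_boot all_order all_algebra.
From mathcomp Require Import Rstruct complex ring zify.
Import GRing.Theory Num.Theory.
Set Implicit Arguments. Unset Strict Implicit. Unset Printing Implicit Defensive.
Local Open Scope ring_scope.

Section RealTrig.
Local Open Scope R_scope.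

Lemma cos_lt1 (x : R) : 0 < x < 2 * PI -> cos x < 1.
Proof.
move=> [x_gt0 x_lt2PI].
have sin_half_gt0 : 0 < sin (x / 2) by apply: sin_gt_0; lra.
have -> : x = 2 * (x / 2) by lra.
rewrite cos_2a_sin; nra.
Qed.

Lemma eta_angle_full (d : nat) : (0 < d)%N -> INR d * (2 * PI / INR d) = 2 * PI.
Proof.
move=> d_gt0; rewrite Rmult_comm /Rdiv Rmult_assoc Rinv_l ?Rmult_1_r //.
by apply/not_0_INR/eqP; rewrite -lt0n.
Qed.

Lemma eta_angle_bounds (m d : nat) : (0 < m < d)%N ->
  0 < INR m * (2 * PI / INR d) < 2 * PI.
Proof.
move=> /andP[m_gt0 m_lt_d].
have m_gt0R : 0 < INR m by apply/lt_0_INR/ltP.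
have m_lt_dR : INR m < INR d by apply/lt_INR/ltP.
have turn_gt0 : 0 < 2 * PI / INR d by apply: Rdiv_lt_0_compat; have := PI_RGT_0; lra.
split; first exact: Rmult_lt_0_compat.
rewrite -{2}(eta_angle_full (ltn_trans m_gt0 m_lt_d)).
exact: Rmult_lt_compat_r.
Qed.

End RealTrig.

Lemma eta_expE (d m : nat) : Defs.eta d ^+ m =
  Complex (cos (INR m * (2 * PI / INR d))) (sin (INR m * (2 * PI / INR d))).
Proof.
elim: m => [|m IH]; first by rewrite expr0 /= Rmult_0_l cos_0 sin_0.
rewrite exprS IH /Defs.eta S_INR /GRing.mul /=.
rewrite Rmult_plus_distr_r Rmult_1_l cos_plus sin_plus.
by congr Complex; rewrite ?RplusE ?RminusE ?RmultE; ring.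
Qed.

Lemma eta_prim_root (d : nat) : (0 < d)%N -> d.-primitive_root (Defs.eta d).
Proof.
move=> d_gt0.
have etad1 : Defs.eta d ^+ d = 1 by rewrite eta_expE eta_angle_full // cos_2PI sin_2PI.
have [m prim_m m_dvd_d] := prim_order_exists d_gt0 etad1.
have m_gt0 := prim_order_gt0 prim_m.
suff d_eq_m : d = m by rewrite {1}d_eq_m.
apply/eqP; rewrite eqn_leq (dvdn_leq d_gt0 m_dvd_d) andbT leqNgt; apply/negP => m_lt_d.
have := congr1 (@complex.Re _) (prim_expr_order prim_m); rewrite eta_expE /=.
by apply/Rlt_not_eq/cos_lt1/eta_angle_bounds; rewrite m_gt0.
Qed.

Lemma eta_exp_inj (d : nat) : (0 < d)%N -> injective (fun j : 'I_d => Defs.eta d ^+ j).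
Proof.
move=> d_gt0 j k /eqP; rewrite (eq_prim_root_expr (eta_prim_root d_gt0)).
by rewrite !modn_small // => /eqP/val_inj.
Qed.

Section ProdXsubC.
Variables (R : idomainType) (I : finType) (c : I -> R).
Hypothesis c_inj : injective c.

Lemma root_prod_XsubC_in (A : {set I}) j :
  root (\prod_(k in A) ('X - (c k)%:P)) (c j) = (j \in A).
Proof.
rewrite rootE horner_prod; apply/prodf_eq0/idP => [[k kA]|jA].
  by rewrite hornerXsubC subr_eq0 (inj_eq c_inj) => /eqP ->.
by exists j; rewrite // hornerXsubC subrr.
Qed.

Lemma prod_XsubC_inj (A B : {set I}) :
  \prod_(k in A) ('X - (c k)%:P) = \prod_(k in B) ('X - (c k)%:P) -> A = B.
Proof. by move=> eqAB; apply/setP => j; rewrite -!root_prod_XsubC_in eqAB. Qed.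

End ProdXsubC.

Lemma homog_deg_coef d n m (p : bipoly) i j : (0 < d)%N ->
  homog_deg d ((n%:R - m%:R) / d%:R) p -> p`_i`_j != 0 -> (2 * (i + j) + m = n)%N.
Proof.
move=> d_gt0 p_homog /p_homog; rewrite mulrA => /(mulIf (invr_neq0 _)).
rewrite pnatr_eq0 -lt0n => /(_ d_gt0) eq_deg.
by apply/eqP; rewrite -(eqr_nat CC) natrD natrM mulrC eq_deg subrK.
Qed.

Lemma homog_deg_eq0 d n m (p : bipoly) : (0 < d)%N -> (n < m)%N ->
  homog_deg d ((n%:R - m%:R) / d%:R) p -> p = 0.
Proof.
move=> d_gt0 lt_nm p_homog; apply/polyP => i; apply/polyP => j; rewrite !coef0.
apply/eqP; apply: contraTT lt_nm => /(homog_deg_coef d_gt0 p_homog) <-.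
by rewrite -leqNgt leq_addl.
Qed.

Lemma homog_deg_const d (p : bipoly) : (0 < d)%N ->
  homog_deg d 0 p -> p = (p`_0`_0)%:P%:P.
Proof.
move=> d_gt0 p_homog.
have {}p_homog : homog_deg d ((0%:R - 0%:R) / d%:R) p by rewrite subrr mul0r.
apply/polyP => i; apply/polyP => j; rewrite !coefC.
case: i j => [|i] [|j] //=; rewrite ?coefC ?coef0 //=; apply/eqP; apply: contraT;
  by move=> /(homog_deg_coef d_gt0 p_homog); lia.
Qed.

Lemma homog_deg0 d a : homog_deg d a (0 : bipoly).
Proof. by move=> i j; rewrite !coef0 eqxx. Qed.

Lemma homog_degC d (c : CC) : homog_deg d 0 c%:P%:P.
Proof. by move=> [|i] [|j]; rewrite ?coefC ?coef0 ?eqxx //= mul0r. Qed.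

Lemma deg0_Phat_sub d (R S : {set 'I_d}) :
  deg0 (Phat R) - deg0 (Phat S) = (#|S|%:R - #|R|%:R) / d%:R.
Proof. by rewrite /=; ring. Qed.

Lemma deg1_Phat_sub d (R S : {set 'I_d}) :
  deg1 (Phat R) - deg1 (Phat S) = (#|R|%:R - #|S|%:R) / d%:R.
Proof. by rewrite /=; ring. Qed.

Lemma dif1_Phat d (S : {set 'I_d}) :
  dif1 (Phat S) = \prod_(j in S) ('X - ((Defs.eta d ^+ j)%:P * 'X)%:P).
Proof. by apply: eq_bigr => j _; rewrite /varx /vary polyCM. Qed.

Lemma eta_mulX_inj d : (0 < d)%N ->
  injective (fun j : 'I_d => (Defs.eta d ^+ j)%:P * 'X : {poly CC}).
Proof.
move=> d_gt0 j k /(mulIf (negbT (polyX_eq0 _)))/polyC_inj; exact: eta_exp_inj.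
Qed.

Lemma ZMF0 d (M N : mf11) : ZMF d M N (0, 0).
Proof. by split; rewrite /= ?mulr0 ?mul0r //; exact: homog_deg0. Qed.

Lemma ZMF_Phat_scalar_id d (S : {set 'I_d}) (c : CC) :
  ZMF d (Phat S) (Phat S) (c%:P%:P, c%:P%:P).
Proof.
by split; rewrite ?subrr; [exact: homog_degC | exact: homog_degC | exact: mulrC ..].
Qed.

Section ZMF_Phat.
Variables (d : nat) (R S : {set 'I_d}) (f0 f1 : bipoly).
Hypotheses (d_gt0 : (0 < d)%N) (f_ZMF : ZMF d (Phat R) (Phat S) (f0, f1)).

Lemma ZMF_Phat_card_neq : #|R| != #|S| -> (f0, f1) = (0, 0).
Proof.
case: f_ZMF; rewrite deg0_Phat_sub deg1_Phat_sub !dif1_Phat /=.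
move=> f0_homog f1_homog dif1_eq _.
have prod_neq0 (A : {set 'I_d}) :
    \prod_(j in A) ('X - ((Defs.eta d ^+ j)%:P * 'X)%:P) != 0.
  exact: monic_neq0 (monic_prod_XsubC _ _ _).
case: ltngtP => // [lt_RS | lt_SR] _.
- have f1_eq0 := homog_deg_eq0 d_gt0 lt_RS f1_homog.
  move: dif1_eq; rewrite f1_eq0 mulr0 => /esym/eqP.
  by rewrite mulf_eq0 (negbTE (prod_neq0 R)) orbF => /eqP ->.
- have f0_eq0 := homog_deg_eq0 d_gt0 lt_SR f0_homog.
  move: dif1_eq; rewrite f0_eq0 mul0r => /eqP.
  by rewrite mulf_eq0 (negbTE (prod_neq0 S)) => /eqP ->.
Qed.

Lemma ZMF_Phat_card_eq : #|R| = #|S| ->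
  exists2 c : CC, (f0, f1) = (c%:P%:P, c%:P%:P) & c = 0 \/ R = S.
Proof.
case: f_ZMF; rewrite deg0_Phat_sub deg1_Phat_sub !dif1_Phat /=.
move=> f0_homog f1_homog dif1_eq _ eq_card.
rewrite eq_card subrr mul0r in f0_homog f1_homog.
rewrite (homog_deg_const d_gt0 f0_homog) (homog_deg_const d_gt0 f1_homog) in dif1_eq *.
set a := f0`_0`_0 in dif1_eq *; set b := f1`_0`_0 in dif1_eq *.
have eq_ba : b = a.
  move/(congr1 lead_coef): dif1_eq; rewrite [X in lead_coef X]mulrC.
  rewrite !lead_coef_Mmonic; try exact: monic_prod_XsubC.
  by rewrite !lead_coefC => /polyC_inj.
exists a; first by rewrite eq_ba.
move: dif1_eq; rewrite eq_ba mulrC.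
have [-> | a_neq0 dif1_eq] := eqVneq a 0; [by left | right].
have aPP_neq0 : a%:P%:P != 0 :> bipoly by rewrite !polyC_eq0.
by apply: (prod_XsubC_inj (eta_mulX_inj d_gt0)); apply/esym/(mulfI aPP_neq0).
Qed.

Lemma ZMF_Phat_scalar :
  exists2 c : CC, (f0, f1) = (c%:P%:P, c%:P%:P) & c = 0 \/ R = S.
Proof.
have [eq_card | neq_card] := eqVneq #|R| #|S|; first exact: ZMF_Phat_card_eq.
by exists 0; [exact: ZMF_Phat_card_neq | left].
Qed.

End ZMF_Phat.

Theorem lemma3p12 (d : nat) (hd : (2 <= d)%N) (R S : {set 'I_d}) :
  (R = S -> forall f : bipoly * bipoly,
     ZMF d (Phat R) (Phat S) f <-> exists c : CC, f = (c%:P%:P, c%:P%:P)) /\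
  (R <> S -> forall f : bipoly * bipoly,
     ZMF d (Phat R) (Phat S) f <-> f = (0, 0)).
Proof.
have d_gt0 : (0 < d)%N := ltnW hd.
split=> [<- | neq_RS] [f0 f1]; split.
- by case/(ZMF_Phat_scalar d_gt0) => c -> _; exists c.
- by case=> c ->; exact: ZMF_Phat_scalar_id.
- by case/(ZMF_Phat_scalar d_gt0) => c -> [-> | /neq_RS].
- by move=> ->; exact: ZMF0.
Qed.
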